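(* Let $P\in\{0,1\}^{k\times\ell}$ be a pattern with a row $r\in[k]$ and a column $c\in[\ell]$ such that $\mathrm{supp}(P)\subseteq(\{r\}\times[\ell])\cup([k]\times[c,\ell])$. Then every 1-entry of $P$ in $\{r\}\times[c]$ is row-bounding.
   Context: All matrices are binary; rows numbered top to bottom, columns left to right; $(i,j)$ is the entry in row $i$, column $j$; $\mathrm{supp}$ is the set of 1-entries; $[a,b]=\{a,\dots,b\}$, $[n]=[1,n]$. $M\Delta f$ is $M$ with the value of entry $f$ switched. An embedding of $P\in\{0,1\}^{k\times\ell}$ into $M\in\{0,1\}^{m\times n}$ is a map $\phi:[k]\times[\ell]\to[m]\times[n]$ sending 1-entries to 1-entries and such that if $e_1=(i_1,j_1)$, $e_2=(i_2,j_2)$ map to $(i_1^*,j_1^* )$, $(i_2^*,j_2^* )$, then $i_1<i_2\Rightarrow i_1^*<i_2^*$ and $j_1<j_2\Rightarrow j_1^*<j_2^*$. $M$ avoids $P$ if no embedding exists; $\mathrm{Av}(P)$ is the set of $P$-avoiding matrices. For a 1-entry $e$ of $P$ and $M\in\mathrm{Av}(P)$, a 0-entry $f$ of $M$ is critical for $e$ if some embedding of $P$ into $M\Delta f$ maps $e$ to $f$; a horizontal 0-run (maximal run of consecutive 0-entries in a row) is critical for $e$ if it contains a 0-entry critical for $e$. The 1-entry $e$ is row-bounding if there is a constant $K$ such that for every $M\in\mathrm{Av}(P)$ every row of $M$ contains at most $K$ horizontal 0-runs critical for $e$. *)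

(* Binary matrices are 'M[bool]_(m, n); rows/columns are
   0-based ordinals (row/column i of the paper is ordinal i-1). *)
From mathcomp Require Import all_boot all_order all_algebra.
Set Implicit Arguments. Unset Strict Implicit. Unset Printing Implicit Defensive.

Section Patterns.
Variables (k l m n : nat).

Definition is_embedding (P : 'M[bool]_(k, l)) (M : 'M[bool]_(m, n))
    (phi : {ffun 'I_k * 'I_l -> 'I_m * 'I_n}) : bool :=
  [forall e : 'I_k * 'I_l, P e.1 e.2 ==> M (phi e).1 (phi e).2] &&
  [forall e1 : 'I_k * 'I_l, forall e2 : 'I_k * 'I_l,
     ((e1.1 < e2.1)%N ==> ((phi e1).1 < (phi e2).1)%N) &&
     ((e1.2 < e2.2)%N ==> ((phi e1).2 < (phi e2).2)%N)].

Definition contains (P : 'M[bool]_(k, l)) (M : 'M[bool]_(m, n)) : bool :=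
  [exists phi, is_embedding P M phi].

Definition avoids (P : 'M[bool]_(k, l)) (M : 'M[bool]_(m, n)) : bool :=
  ~~ contains P M.

Definition flip_entry (M : 'M[bool]_(m, n)) (f : 'I_m * 'I_n) : 'M[bool]_(m, n) :=
  \matrix_(i, j) (if (i, j) == f then ~~ M i j else M i j).

Definition critical (P : 'M[bool]_(k, l)) (e : 'I_k * 'I_l)
    (M : 'M[bool]_(m, n)) (f : 'I_m * 'I_n) : bool :=
  ~~ M f.1 f.2 &&
  [exists phi, is_embedding P (flip_entry M f) phi && (phi e == f)].

Definition hrun (M : 'M[bool]_(m, n)) (i : 'I_m) (a b : 'I_n) : bool :=
  [&& (a <= b)%N,
      [forall j : 'I_n, ((a <= j)%N && (j <= b)%N) ==> ~~ M i j],
      [forall j : 'I_n, (j.+1 == a :> nat) ==> M i j] &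
      [forall j : 'I_n, (j == b.+1 :> nat) ==> M i j]].

Definition critical_hrun (P : 'M[bool]_(k, l)) (e : 'I_k * 'I_l)
    (M : 'M[bool]_(m, n)) (i : 'I_m) (a b : 'I_n) : bool :=
  hrun M i a b &&
  [exists j : 'I_n, [&& (a <= j)%N, (j <= b)%N & critical P e M (i, j)]].

Definition num_critical_hruns (P : 'M[bool]_(k, l)) (e : 'I_k * 'I_l)
    (M : 'M[bool]_(m, n)) (i : 'I_m) : nat :=
  #|[set ab : 'I_n * 'I_n | critical_hrun P e M i ab.1 ab.2]|.

End Patterns.

Definition row_bounding (k l : nat) (P : 'M[bool]_(k, l)) (e : 'I_k * 'I_l) : Prop :=
  exists K : nat, forall (m n : nat) (M : 'M[bool]_(m, n)),
    avoids P M -> forall i : 'I_m, (num_critical_hruns P e M i <= K)%N.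

From mathcomp Require Import all_boot all_order all_algebra.
From mathcomp Require Import zify.
Set Implicit Arguments. Unset Strict Implicit. Unset Printing Implicit Defensive.

(* Suppose row i of a P-avoiding M had more than j+1 critical 0-runs for
   e = (r, j), and let x be its rightmost critical 0-entry. Runs are determined
   by their first column, and every run not starting in column 0 is preceded by
   a 1-entry, so row i has 1-entries y_0 < ... < y_j left of x. Start from an
   embedding of P into M with x switched on, sending e to x. All 1-entries of
   P left of column j lie in row r, so they can be pushed onto y_0, ..., y_j
   (or, if everything left of column j already lands left of y_j, e alone is
   moved onto y_j), giving an embedding of P into M itself. *)


Section Embeddings.
Variables (k l m n : nat) (P : 'M[bool]_(k, l)) (M : 'M[bool]_(m, n)).
Implicit Types (phi : {ffun 'I_k * 'I_l -> 'I_m * 'I_n}) (e : 'I_k * 'I_l).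

Lemma is_embeddingI phi :
  (forall e, P e.1 e.2 -> M (phi e).1 (phi e).2) ->
  (forall e1 e2, (e1.1 < e2.1)%N -> ((phi e1).1 < (phi e2).1)%N) ->
  (forall e1 e2, (e1.2 < e2.2)%N -> ((phi e1).2 < (phi e2).2)%N) ->
  is_embedding P M phi.
Proof.
move=> one row col; apply/andP; split; apply/forallP => e1; first exact/implyP/one.
by apply/forallP => e2; apply/andP; split; apply/implyP; [apply: row | apply: col].
Qed.

Section Embedding.
Variable phi : {ffun 'I_k * 'I_l -> 'I_m * 'I_n}.
Hypothesis phi_emb : is_embedding P M phi.

Lemma embedding_one e : P e.1 e.2 -> M (phi e).1 (phi e).2.
Proof. by case/andP: phi_emb => /forallP /(_ e) /implyP. Qed.

Lemma embedding_row e1 e2 : (e1.1 < e2.1)%N -> ((phi e1).1 < (phi e2).1)%N.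
Proof. by case/andP: phi_emb => _ /forallP /(_ e1) /forallP /(_ e2) /andP [/implyP]. Qed.

Lemma embedding_col e1 e2 : (e1.2 < e2.2)%N -> ((phi e1).2 < (phi e2).2)%N.
Proof. by case/andP: phi_emb => _ /forallP /(_ e1) /forallP /(_ e2) /andP [_ /implyP]. Qed.

Lemma embedding_inj : injective phi.
Proof.
move=> [a1 b1] [a2 b2] E; congr pair; apply: val_inj.
  case: (ltngtP a1 a2) => // lt;
    [have := @embedding_row (a1, b1) (a2, b2) lt | have := @embedding_row (a2, b2) (a1, b1) lt];
    by rewrite E ltnn.
case: (ltngtP b1 b2) => // lt;
  [have := @embedding_col (a1, b1) (a2, b2) lt | have := @embedding_col (a2, b2) (a1, b1) lt];
  by rewrite E ltnn.
Qed.
End Embedding.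
End Embeddings.

Arguments embedding_row {k l m n P M phi} phi_emb e1 e2.
Arguments embedding_col {k l m n P M phi} phi_emb e1 e2.

Lemma embedding_flip_one k l m n (P : 'M[bool]_(k, l)) (M : 'M[bool]_(m, n)) f
    (phi : {ffun 'I_k * 'I_l -> 'I_m * 'I_n}) e0 e :
  is_embedding P (flip_entry M f) phi -> phi e0 = f ->
  e != e0 -> P e.1 e.2 -> M (phi e).1 (phi e).2.
Proof.
move=> phi_emb phi_e0 ne Pe; have := embedding_one phi_emb Pe.
by rewrite mxE -surjective_pairing -phi_e0 (inj_eq (embedding_inj phi_emb)) (negbTE ne).
Qed.

Section MoveLeft.
Variables (k l m n : nat) (P : 'M[bool]_(k, l)) (M : 'M[bool]_(m, n)).
Variables (r : 'I_k) (j : 'I_l) (i : 'I_m) (x : 'I_n).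
Variable phi : {ffun 'I_k * 'I_l -> 'I_m * 'I_n}.
Implicit Type e : 'I_k * 'I_l.
Hypothesis phi_emb : is_embedding P (flip_entry M (i, x)) phi.
Hypothesis phi_rj : phi (r, j) = (i, x).
Variable y : nat -> 'I_n.
Hypothesis y_one : forall b, (b <= j)%N -> M i (y b).
Hypothesis y_lt_x : forall b, (b <= j)%N -> (y b < x)%N.
Hypothesis y_incr : forall b1 b2, (b1 < b2)%N -> (b2 <= j)%N -> (y b1 < y b2)%N.

Let phi_one e : e != (r, j) -> P e.1 e.2 -> M (phi e).1 (phi e).2.
Proof. exact: embedding_flip_one phi_emb phi_rj. Qed.

Let phi_row_lt e : (e.1 < r)%N -> ((phi e).1 < i)%N.
Proof. by move=> lt; have := embedding_row phi_emb e (r, j) lt; rewrite phi_rj. Qed.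

Let phi_row_gt e : (r < e.1)%N -> (i < (phi e).1)%N.
Proof. by move=> lt; have := embedding_row phi_emb (r, j) e lt; rewrite phi_rj. Qed.

Let y_lt_phi_col b e : (b <= j)%N -> (j < e.2)%N -> (y b < (phi e).2)%N.
Proof.
move=> bj lt; have := embedding_col phi_emb (r, j) e lt.
by rewrite phi_rj; apply: ltn_trans (y_lt_x bj).
Qed.

Lemma contains_move_entry :
  (forall e, (e.2 < j)%N -> ((phi e).2 < y j)%N) -> contains P M.
Proof.
move=> left_lt_y; apply/existsP.
exists [ffun e => if e == (r, j) then (i, y j) else phi e]; apply: is_embeddingI.
- by move=> e Pe; rewrite ffunE; case: eqVneq => [_|ne]; [apply: y_one | apply: phi_one].
- move=> e1 e2 lt; rewrite !ffunE.
  case: eqVneq lt => [-> | _]; case: eqVneq => [-> | _] //= lt; try lia.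
  + exact: phi_row_gt.
  + exact: phi_row_lt.
  + exact: embedding_row phi_emb e1 e2 lt.
- move=> e1 e2 lt; rewrite !ffunE.
  case: eqVneq lt => [-> | _]; case: eqVneq => [-> | _] //= lt; try lia.
  + exact: y_lt_phi_col.
  + exact: left_lt_y.
  + exact: embedding_col phi_emb e1 e2 lt.
Qed.

Lemma contains_move_prefix e0 :
  (forall e, (e.2 < j)%N -> P e.1 e.2 -> e.1 = r) ->
  (e0.2 < j)%N -> (y j <= (phi e0).2)%N -> contains P M.
Proof.
move=> left_in_row e0j y_le_e0; apply/existsP.
pose moved e := (e.2 < j)%N || (e == (r, j)).
have moved_le e : moved e -> (e.2 <= j)%N.
  by rewrite /moved; case: eqP => [-> /= | _]; rewrite ?orbT ?orbF // => /ltnW.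
have unmoved_ge e : ~~ moved e -> [/\ (j <= e.2)%N, e != (r, j) & (e.2 = j :> nat -> e.1 != r)].
  case: e => a b; rewrite negb_or -leqNgt => /andP [jb ne]; split=> // bj.
  by apply: contra ne => /= /eqP ar; apply/eqP; congr pair; [exact: ar | apply: val_inj].
exists [ffun e : 'I_k * 'I_l => (if (e.1 == r) && (e.2 <= j)%N then i else (phi e).1,
                               if moved e then y e.2 else (phi e).2)].
apply: is_embeddingI.
- move=> e Pe; rewrite ffunE /=.
  case: (boolP (moved e)) => [mv | /unmoved_ge [je ne ejr]].
    have er : e.1 = r by case/orP: mv => [/left_in_row -> // | /eqP ->].
    by rewrite er eqxx moved_le //; apply/y_one/moved_le.
  have -> : ((e.1 == r) && (e.2 <= j)%N) = false.
    by case: (ltngtP e.2 j) => [lt | // | /ejr /negbTE -> //]; lia.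
  exact: phi_one.
- move=> e1 e2 lt; rewrite !ffunE /=.
  case: ifP => [/andP [/eqP e1r _] | _]; case: ifP => [/andP [/eqP e2r _] | _].
  + by move: lt; rewrite e1r e2r ltnn.
  + by apply: phi_row_gt; rewrite -e1r.
  + by apply: phi_row_lt; rewrite -e2r.
  + exact: embedding_row phi_emb e1 e2 lt.
- move=> e1 e2 lt; rewrite !ffunE /=.
  case: (boolP (moved e1)) => [mv1 | /unmoved_ge [je1 _ _]];
    case: (boolP (moved e2)) => [mv2 | /unmoved_ge [je2 _ _]].
  + by apply: y_incr lt (moved_le _ mv2).
  + have e1j := moved_le _ mv1.
    case: (ltngtP j e2.2) => [je2' | ? | ej]; [exact: y_lt_phi_col | lia |].
    (* e2 sits in column j outside row r, so it lands right of e0, hence of y_j. *)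
    apply: ltn_trans (y_incr lt (eq_leq (esym ej))) _; rewrite -ej.
    by apply: leq_ltn_trans y_le_e0 (embedding_col phi_emb e0 e2 _); rewrite -ej.
  + by have := moved_le _ mv2; lia.
  + exact: embedding_col phi_emb e1 e2 lt.
Qed.

Lemma contains_of_left_ones :
  (forall e, (e.2 < j)%N -> P e.1 e.2 -> e.1 = r) -> contains P M.
Proof.
move=> left_in_row.
case: (boolP [exists e : 'I_k * 'I_l, (e.2 < j)%N && (y j <= (phi e).2)%N]).
  by case/existsP=> e0 /andP [e0j y_le]; apply: contains_move_prefix y_le.
move/existsPn=> none; apply: contains_move_entry => e ej.
by move/(_ e): none; rewrite ej -ltnNge.
Qed.

End MoveLeft.

Lemma critical_left_ones_contains k l m n (P : 'M[bool]_(k, l)) (M : 'M[bool]_(m, n))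
    (r : 'I_k) (j : 'I_l) (i : 'I_m) (x : 'I_n) (y : nat -> 'I_n) :
  (forall e : 'I_k * 'I_l, (e.2 < j)%N -> P e.1 e.2 -> e.1 = r) ->
  critical P (r, j) M (i, x) ->
  (forall b, (b <= j)%N -> M i (y b)) ->
  (forall b, (b <= j)%N -> (y b < x)%N) ->
  (forall b1 b2, (b1 < b2)%N -> (b2 <= j)%N -> (y b1 < y b2)%N) ->
  contains P M.
Proof.
move=> left_in_row /andP [_ /existsP [phi /andP [phi_emb /eqP phi_rj]]] y_one y_lt_x y_incr.
exact: (contains_of_left_ones phi_emb phi_rj y_one y_lt_x y_incr left_in_row).
Qed.

Lemma hrun_end_uniq m n (M : 'M[bool]_(m, n)) (i : 'I_m) (a b1 b2 : 'I_n) :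
  hrun M i a b1 -> hrun M i a b2 -> b1 = b2.
Proof.
suff no_nested (b b' : 'I_n) : (b < b')%N -> hrun M i a b -> hrun M i a b' -> False.
  move=> run1 run2; case: (ltngtP b1 b2) => [lt | lt | /val_inj //].
  - by case: (no_nested _ _ lt run1 run2).
  - by case: (no_nested _ _ lt run2 run1).
move=> lt; pose z := Ordinal (leq_ltn_trans lt (ltn_ord b')).
case/and4P=> ab _ _ /forallP /(_ z); rewrite eqxx /= => one.
case/and4P=> _ /forallP /(_ z); rewrite /= one lt andbT implybF => /negP not_ab _ _.
by apply: not_ab; apply: leq_trans ab (leqnSn b).
Qed.

Lemma increasing_in_set n (A : {set 'I_n}) j : (j < #|A|)%N ->
  exists2 y : nat -> 'I_n, (forall b, (b <= j)%N -> y b \in A)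
    & (forall b1 b2, (b1 < b2)%N -> (b2 <= j)%N -> (y b1 < y b2)%N).
Proof.
move=> jA; have [x0 Ax0] : exists x0, x0 \in A by apply/set0Pn; rewrite -card_gt0; lia.
have sizeA : size (enum A) = #|A| by rewrite cardE.
have sorted_A : sorted ltn (map val (enum A)).
  rewrite -[enum _](eq_filter (mem_enum _)) -(eq_filter (mem_map val_inj _)).
  by rewrite -filter_map (sorted_filter ltn_trans) // unlock val_ord_enum iota_ltn_sorted.
exists (fun b => nth x0 (enum A) b) => [b bj | b1 b2 b12 b2j].
  by rewrite -mem_enum mem_nth // sizeA; lia.
rewrite -!(nth_map x0 (val x0)) ?sizeA; try lia.
by apply: (sorted_ltn_nth ltn_trans) => //; rewrite inE size_map sizeA; lia.
Qed.

Lemma critical_hruns_left_ones k l m n (P : 'M[bool]_(k, l)) (e : 'I_k * 'I_l)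
    (M : 'M[bool]_(m, n)) (i : 'I_m) :
  (0 < num_critical_hruns P e M i)%N ->
  exists2 x : 'I_n, critical P e M (i, x)
    & (num_critical_hruns P e M i <= #|[set z : 'I_n | M i z && (z < x)%N]|.+1)%N.
Proof.
rewrite /num_critical_hruns; set S := [set ab | _] => S_gt0.
have [[a0 b0]] : exists ab, ab \in S by apply/set0Pn; rewrite -card_gt0.
rewrite inE => /andP [_ /existsP [x0 /and3P [_ _ crit0]]].
case: (@arg_maxnP _ x0 (fun x => critical P e M (i, x)) val crit0) => x crit x_max.
exists x => //.
set Z := [set ab : 'I_n * 'I_n | ab.1 == 0 :> nat].
have SZ_le1 : (#|S :&: Z| <= 1)%N.
  apply/card_le1_eqP => -[a1 b1] [a2 b2]; rewrite !inE /= => /andP [/andP [run1 _] /eqP a10].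
  move=> /andP [/andP [run2 _] /eqP a20]; have a12 : a1 = a2 by apply: val_inj; rewrite /= a10 a20.
  by rewrite -a12 in run2 *; rewrite (hrun_end_uniq run1 run2).
have -> : #|S| = (#|S :&: Z| + #|S :\: Z|)%N by rewrite cardsID.
pose pred_col (a : 'I_n) : 'I_n := Ordinal (leq_ltn_trans (leq_pred a) (ltn_ord a)).
rewrite addnC -addn1 leq_add // -(card_in_imset (f := fun ab => pred_col ab.1)).
- apply/subset_leq_card/subsetP => _ /imsetP [[a b] + ->].
  rewrite !inE /= -lt0n => /andP [a_gt0 /andP [/and4P [_ _ /forallP /(_ (pred_col a)) left _]]].
  move=> /existsP [x' /and3P [ax' _ crit']]; rewrite (implyP left) /=; last lia.
  have x'_le_x : (x' <= x)%N := x_max _ crit'.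
  lia.
- move=> [a1 b1] [a2 b2]; rewrite !inE /= -!lt0n => /andP [a10 /andP [run1 _]].
  move=> /andP [a20 /andP [run2 _]] /(congr1 val) /= a12.
  have {}a12 : a1 = a2 by apply: val_inj => /=; lia.
  by rewrite -a12 in run2 *; rewrite (hrun_end_uniq run1 run2).
Qed.

Theorem lemma3p8 (k l : nat) (P : 'M[bool]_(k, l)) (r : 'I_k) (c : 'I_l)
  (hsupp : forall (i : 'I_k) (j : 'I_l), P i j -> i = r \/ (c <= j)%N) :
  forall j : 'I_l, (j <= c)%N -> P r j -> row_bounding P (r, j).
Proof.
move=> j jc _; exists j.+1 => m n M avoid_PM i; rewrite leqNgt; apply/negP => many.
have [x crit many_left] := critical_hruns_left_ones (ltn_trans (ltn0Sn j) many).
have [|y y_left y_incr] := @increasing_in_set _ [set z : 'I_n | M i z && (z < x)%N] j.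
  exact: leq_trans many many_left.
have left_in_row (e : 'I_k * 'I_l) : (e.2 < j)%N -> P e.1 e.2 -> e.1 = r.
  by move=> ej /hsupp [//|]; lia.
move/negP: avoid_PM; apply; apply: (critical_left_ones_contains left_in_row crit _ _ y_incr);
by move=> b /y_left; rewrite inE => /andP [].
Qed.
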